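(* For any positive integer $n$, $$\frac{3}{2}\sum_{k=1}^{n}\frac{1}{k}\binom{2k}{k}=\sum_{k=1}^{n}\frac{1}{k}\binom{n+k}{k}+H_n(1),$$ $$\sum_{k=1}^n\binom{2k}{k}\left(\frac{3H_k(1)}{2k}-\frac{1}{k^2}\right)=\sum_{k=1}^{n}\binom{n+k}{k}\frac{H_k(1)}{k}-H_n(2),$$ $$\sum_{k=1}^n\binom{2k}{k}\left(\frac{3H_k(2)}{k}-\frac{1}{2k^3}\right)=\sum_{k=1}^{n}\binom{n+k}{k}\frac{H_k(2)+H_n(2)}{k}+H_n(2)H_n(1)-H_n(1,2).$$
   Context: For positive integers $s$, $H_n(s)=\sum_{j=1}^n j^{-s}$, and $H_n(1,2)=\sum_{1\le i<j\le n}\frac{1}{i\,j^2}$. *)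

From mathcomp Require Import all_boot all_order all_algebra.
Set Implicit Arguments. Unset Strict Implicit. Unset Printing Implicit Defensive.
Import Order.TTheory GRing.Theory Num.Theory.
Local Open Scope ring_scope.

Definition H (n s : nat) : rat := \sum_(1 <= j < n.+1) (j%:R ^+ s)^-1.

Definition H12 (n : nat) : rat :=
  \sum_(1 <= j < n.+1) \sum_(1 <= i < j) (i%:R * j%:R ^+ 2)^-1.

From mathcomp Require Import all_boot all_order all_algebra.
From mathcomp Require Import zify ring.
Import Order.TTheory GRing.Theory Num.Theory.
Local Open Scope ring_scope.

(* Write S_n(u) = sum_{k=1}^n C(n+k,k) u_k / k.  Pascal's rule gives
     S_{n+1}(u) = S_n(u) + C(2n+2,n+1) u_{n+1} / (n+1)
                  + 1/(n+1) * sum_{k=1}^n C(n+k,k) u_k,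
   and for u = 1, H_k(1), H_k(2) the last sum has a closed form, obtained by
   Abel summation against the hockey-stick identity
   sum_{k=0}^m C(a+k,k) = C(a+m+1,m).  Since C(2n+2,n+1) = 2 C(2n+1,n), the
   three identities then follow by induction on n. *)

Lemma mul_bin_succ n k : (k.+1 * 'C(n + k.+1, k.+1) = n.+1 * 'C(n + k.+1, k))%N.
Proof. by rewrite mul_bin_left; congr (_ * _)%N; lia. Qed.

Lemma bin_central_succ n : ('C(2 * n.+1, n.+1) = 2 * 'C(n + n.+1, n))%N.
Proof.
have bin_sym : 'C(n + n.+1, n.+1) = 'C(n + n.+1, n).
  by rewrite -[in RHS]bin_sub ?leq_addr // addKn.
by rewrite mul2n -addnn addSn binS bin_sym addnn -mul2n.
Qed.

Lemma sum_bin_hockey a m : (\sum_(0 <= k < m.+1) 'C(a + k, k) = 'C(a + m.+1, m))%N.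
Proof.
elim: m => [|m IH]; first by rewrite big_nat1 !bin0.
by rewrite big_nat_recr //= IH [in RHS]addnS binS addnC.
Qed.

Lemma sum_bin_hockey_pos (R : pzRingType) a m :
  \sum_(1 <= k < m.+1) 'C(a + k, k)%:R = 'C(a + m.+1, m)%:R - 1 :> R.
Proof.
by rewrite -sum_bin_hockey natr_sum [in RHS]big_ltn // bin0 addrC addKr.
Qed.

Section BinomialSums.

Variable R : numFieldType.

Lemma natr_bin_succ n k :
  'C(n + k.+1, k.+1)%:R = n.+1%:R / k.+1%:R * 'C(n + k.+1, k)%:R :> R.
Proof.
by rewrite mulrAC -natrM -mul_bin_succ natrM mulrC mulKf ?pnatr_eq0.
Qed.

(* Pascal's rule, together with C(n+k, k-1) / k = C(n+k, k) / (n+1). *)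
Lemma binomial_sum_succ (u : nat -> R) n :
  \sum_(1 <= k < n.+2) 'C(n.+1 + k, k)%:R * u k / k%:R =
  \sum_(1 <= k < n.+1) 'C(n + k, k)%:R * u k / k%:R
  + 'C(2 * n.+1, n.+1)%:R * u n.+1 / n.+1%:R
  + n.+1%:R^-1 * \sum_(1 <= k < n.+1) 'C(n + k, k)%:R * u k.
Proof.
rewrite big_nat_recr //= [(n.+1 + n.+1)%N]addnn -mul2n [RHS]addrAC; congr (_ + _).
rewrite big_distrr -big_split; apply: eq_big_nat => -[|k] // _ /=.
rewrite addSn binS natrD natr_bin_succ.
field; by rewrite !nat1r !pnatr_eq0.
Qed.

(* Abel summation: C(a+k+1, k) is the k-th partial sum of the weights C(a+j, j). *)
Lemma sum_bin_partial_sum (f : nat -> R) a m :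
  \sum_(1 <= k < m.+1) 'C(a + k, k)%:R * \sum_(1 <= j < k.+1) f j =
  'C(a + m.+1, m)%:R * \sum_(1 <= j < m.+1) f j
  - a.+1%:R^-1 * \sum_(1 <= k < m.+1) 'C(a + k, k)%:R * (k%:R * f k).
Proof.
elim: m => [|m IH]; first by rewrite !big_geq // !mulr0 subr0.
rewrite !(big_nat_recr _ _ _ (ltn0Sn _)) /= IH [in RHS]addnS binS natrD.
rewrite natr_bin_succ.
field; by rewrite !nat1r !pnatr_eq0.
Qed.

End BinomialSums.

Lemma HS n s : H n.+1 s = H n s + (n.+1%:R ^+ s)^-1.
Proof. by rewrite /H big_nat_recr. Qed.

Lemma H12S n : H12 n.+1 = H12 n + (n.+1%:R ^+ 2)^-1 * H n 1.
Proof.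
rewrite /H12 big_nat_recr //=; congr (_ + _).
by rewrite /H big_distrr; apply: eq_bigr => i _; rewrite invfM expr1 mulrC.
Qed.

Lemma sum_bin_H1 a m :
  \sum_(1 <= k < m.+1) 'C(a + k, k)%:R * H k 1 =
  'C(a + m.+1, m)%:R * H m 1 - ('C(a + m.+1, m)%:R - 1) / a.+1%:R.
Proof.
rewrite [LHS]sum_bin_partial_sum -sum_bin_hockey_pos [X in _ = _ - X]mulrC.
congr (_ - _ * _); apply: eq_big_nat => -[|k] // _ /=.
by rewrite expr1 divff ?mulr1 ?pnatr_eq0.
Qed.

Lemma sum_bin_H2 a m :
  \sum_(1 <= k < m.+1) 'C(a + k, k)%:R * H k 2 =
  'C(a + m.+1, m)%:R * H m 2
  - a.+1%:R^-1 * \sum_(1 <= k < m.+1) 'C(a + k, k)%:R / k%:R.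
Proof.
rewrite [LHS]sum_bin_partial_sum.
congr (_ - _ * _); apply: eq_big_nat => -[|k] // _ /=.
by rewrite expr2 invfM mulVKf ?pnatr_eq0.
Qed.

Lemma sum_central_bin_inv n :
  3%:R / 2%:R * \sum_(1 <= k < n.+1) 'C(2 * k, k)%:R / k%:R
  = \sum_(1 <= k < n.+1) 'C(n + k, k)%:R / k%:R + H n 1.
Proof.
have unit_weight m : \sum_(1 <= k < m.+1) 'C(m + k, k)%:R / k%:R
    = \sum_(1 <= k < m.+1) 'C(m + k, k)%:R * 1 / k%:R :> rat.
  by under [RHS]eq_bigr do rewrite mulr1.
elim: n => [|n IH]; first by rewrite !big_geq // /H big_geq // mulr0 addr0.
rewrite unit_weight binomial_sum_succ -unit_weight big_nat_recr // mulrDr IH.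
rewrite (eq_bigr _ (fun k _ => mulr1 ('C(n + k, k)%:R : rat))).
rewrite sum_bin_hockey_pos bin_central_succ natrM HS.
field; by rewrite !nat1r !pnatr_eq0.
Qed.

Lemma sum_central_bin_H1 n :
  \sum_(1 <= k < n.+1) 'C(2 * k, k)%:R *
    (3%:R * H k 1 / (2%:R * k%:R) - (k%:R ^+ 2)^-1)
  = \sum_(1 <= k < n.+1) 'C(n + k, k)%:R * H k 1 / k%:R - H n 2.
Proof.
elim: n => [|n IH]; first by rewrite !big_geq // /H big_geq // subr0.
rewrite binomial_sum_succ big_nat_recr //= IH sum_bin_H1.
rewrite bin_central_succ natrM !HS.
field; by rewrite !nat1r !pnatr_eq0.
Qed.

(* The third identity with H_n(1) + sum_k C(n+k,k)/k rewritten by the first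
   one; unlike the stated form, this one is stable under induction on n. *)
Lemma sum_central_bin_H2' n :
  \sum_(1 <= k < n.+1) 'C(2 * k, k)%:R *
    (3%:R * H k 2 / k%:R - (2%:R * k%:R ^+ 3)^-1)
  = \sum_(1 <= k < n.+1) 'C(n + k, k)%:R * H k 2 / k%:R
    + H n 2 * (3%:R / 2%:R * \sum_(1 <= k < n.+1) 'C(2 * k, k)%:R / k%:R)
    - H12 n.
Proof.
elim: n => [|n IH].
  by rewrite !big_geq // /H12 big_geq // mulr0 subr0 addr0.
rewrite binomial_sum_succ big_nat_recr //= IH sum_bin_H2.
rewrite -[\sum_(1 <= k < n.+1) 'C(n + k, k)%:R / k%:R](addrK (H n 1)).
rewrite -sum_central_bin_inv.
rewrite [X in H n.+1 2 * (_ * X)]big_nat_recr //= bin_central_succ natrM H12S !HS.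
field; by rewrite !nat1r !pnatr_eq0.
Qed.

Theorem mainTheorem3 (n : nat) (hn : (0 < n)%N) :
  [/\ 3%:R / 2%:R * \sum_(1 <= k < n.+1) ('C(2 * k, k))%:R / k%:R
        = \sum_(1 <= k < n.+1) ('C(n + k, k))%:R / k%:R + H n 1 ,
      \sum_(1 <= k < n.+1) ('C(2 * k, k))%:R *
          (3%:R * H k 1 / (2%:R * k%:R) - (k%:R ^+ 2)^-1)
        = \sum_(1 <= k < n.+1) ('C(n + k, k))%:R * H k 1 / k%:R - H n 2
    & \sum_(1 <= k < n.+1) ('C(2 * k, k))%:R *
          (3%:R * H k 2 / k%:R - (2%:R * k%:R ^+ 3)^-1)
        = \sum_(1 <= k < n.+1) ('C(n + k, k))%:R * (H k 2 + H n 2) / k%:R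
          + H n 2 * H n 1 - H12 n ].
Proof.
(* The identities hold for n = 0 as well. *)
split; [exact: sum_central_bin_inv | exact: sum_central_bin_H1 |].
rewrite sum_central_bin_H2' sum_central_bin_inv mulrDr addrA.
congr (_ + _ - _).
rewrite big_distrr -big_split; apply: eq_bigr => k _ /=.
by rewrite mulrDr mulrDl mulrCA mulrA.
Qed.
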